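(* Let $f:\mathcal{P}^n\to X$ be an onto, tops-only voting rule. Then $f$ is not obviously manipulable (NOM) if and only if every veto is a strong veto, i.e., $SV_i=V_i$ for each agent $i\in N$.
   Context: $N=\{1,\dots,n\}$ with $n\ge 2$ is the set of agents and $X$ is a finite set of alternatives with $|X|=m\ge 2$. $\mathcal{P}$ is the set of all strict preferences (linear orders) over $X$; for $P_i\in\mathcal{P}$, $t(P_i)$ is its top (best) alternative and $R_i$ the associated weak preference ($xR_iy$ iff $x=y$ or $xP_iy$). A rule is a function $f:\mathcal{P}^n\to X$, assumed onto. It is tops-only if $f(P)=f(P')$ whenever $t(P_i)=t(P_i')$ for all $i$. For $P_i\in\mathcal{P}$, the option set is $O^f(P_i)=\{f(P_i,P_{-i}):P_{-i}\in\mathcal{P}^{n-1}\}$. For $Y\subseteq X$ nonempty, $B(P_i,Y)$ and $W(P_i,Y)$ denote the best and worst elements of $Y$ according to $P_i$. A report $P_i'$ is a (profitable) manipulation of $f$ at $P_i$ if there is $P_{-i}$ with $f(P_i',P_{-i})\,P_i\,f(P_i,P_{-i})$. Such a manipulation is obvious if $W(P_i,O^f(P_i'))\,P_i\,W(P_i,O^f(P_i))$ or $B(P_i,O^f(P_i'))\,P_i\,B(P_i,O^f(P_i))$. $f$ is NOM if no agent has an obvious manipulation at any preference. Agent $i$ vetoes $x$ via $P_i$ if $x\notin O^f(P_i)$; $V_i$ is the set of alternatives that $i$ vetoes via some preference; for $x\in V_i$, $\mathcal{V}_i^x=\{P_i\in\mathcal{P}: i \text{ vetoes } x \text{ via } P_i\}$.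 Agent $i$ strongly vetoes $x$ if $\mathcal{V}_i^x=\{P_i\in\mathcal{P}:t(P_i)\neq x\}$; $SV_i$ is the set of alternatives strongly vetoed by $i$. *)

From mathcomp Require Import all_boot.
Set Implicit Arguments. Unset Strict Implicit. Unset Printing Implicit Defensive.

Section Voting.
Variables (n : nat) (X : finType).

(* A strict preference (linear order) over X, encoded by its injective (hence
   bijective) rank function into 'I_#|X|: rank 0 is the best alternative. *)
Definition pref := {r : {ffun X -> 'I_#|X|} | injectiveb r}.

Definition prefers (P : pref) (x y : X) : bool := (val P x < val P y)%N.

Definition is_top (P : pref) (x : X) : bool :=
  [forall y, (y != x) ==> prefers P x y].

Definition profile := {ffun 'I_n -> pref}.

Definition upd (P : profile) (i : 'I_n) (Pi : pref) : profile :=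
  [ffun j => if j == i then Pi else P j].

Definition onto (f : profile -> X) := forall x, exists P, f P = x.

Definition tops_only (f : profile -> X) :=
  forall P P' : profile, (forall i, is_top (P i) =1 is_top (P' i)) -> f P = f P'.

Definition option_set (f : profile -> X) (i : 'I_n) (Pi : pref) : {set X} :=
  [set x | [exists P : profile, f (upd P i Pi) == x]].

Definition is_best (P : pref) (Y : {set X}) (b : X) : bool :=
  (b \in Y) && [forall y in Y, (y != b) ==> prefers P b y].
Definition is_worst (P : pref) (Y : {set X}) (w : X) : bool :=
  (w \in Y) && [forall y in Y, (y != w) ==> prefers P y w].

Definition manipulation (f : profile -> X) (i : 'I_n) (Pi Pi' : pref) :=
  exists P : profile, prefers Pi (f (upd P i Pi')) (f (upd P i Pi)).

Definition obvious_manipulation (f : profile -> X) (i : 'I_n) (Pi Pi' : pref) :=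
  manipulation f i Pi Pi' /\
  ((exists w w', [&& is_worst Pi (option_set f i Pi) w,
                     is_worst Pi (option_set f i Pi') w' & prefers Pi w' w])
   \/
   (exists b b', [&& is_best Pi (option_set f i Pi) b,
                     is_best Pi (option_set f i Pi') b' & prefers Pi b' b])).

Definition NOM (f : profile -> X) :=
  forall i Pi Pi', ~ obvious_manipulation f i Pi Pi'.

Definition vetoes_via (f : profile -> X) (i : 'I_n) (x : X) (Pi : pref) : bool :=
  x \notin option_set f i Pi.

Definition in_V (f : profile -> X) (i : 'I_n) (x : X) :=
  exists Pi, vetoes_via f i x Pi.

(* x \in SV_i : V_i^x = {Pi | t(Pi) <> x} (x \in V_i follows since m >= 2) *)
Definition in_SV (f : profile -> X) (i : 'I_n) (x : X) :=
  in_V f i x /\ forall Pi, vetoes_via f i x Pi <-> ~~ is_top Pi x.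

End Voting.

From mathcomp Require Import all_boot zify.
Set Implicit Arguments. Unset Strict Implicit. Unset Printing Implicit Defensive.

(* If every veto is strong, an agent's own top is always in her option set and
   is the only vetoable alternative there; hence the best option of a truthful
   report is already her top, and the worst one cannot be improved by another
   report, which would have to veto it.  Conversely, under NOM: vetoing x
   while ranking x first is obviously manipulable through the report that
   makes x attainable (onto f), improving the best option; and if x is vetoable
   yet attainable under a report whose top is not x, tops-onlyness lets us
   replace that report by one with the same top and x ranked last, whose worst
   option x is improved by the vetoing report. *)

Section Preferences.
Variable X : finType.
Implicit Types (P : pref X) (A : {set X}) (a b w x y : X).

Lemma prefers_irr P x : ~~ prefers P x x.
Proof. by rewrite /prefers ltnn. Qed.

Lemma prefers_asym P x y : prefers P x y -> ~~ prefers P y x.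
Proof. by rewrite /prefers -leqNgt => /ltnW. Qed.

Lemma is_top_prefersN P a y : is_top P a -> ~~ prefers P y a.
Proof.
move=> /forallP /(_ y); case: (eqVneq y a) => [-> _|_ /= /prefers_asym //].
exact: prefers_irr.
Qed.

Lemma is_top_prefers P a y : is_top P a -> y != a -> prefers P a y.
Proof. by move=> /forallP /(_ y) /implyP. Qed.

Lemma is_top_uniq P a y : is_top P a -> is_top P y = (y == a).
Proof.
move=> ta; apply/idP/eqP => [ty|-> //]; apply: contraTeq ty => ya.
apply/negP => /(is_top_prefersN a); apply: negP; apply/negPn.
by move/forallP: ta => /(_ y); rewrite ya.
Qed.

Lemma pref_inj P : injective (val P).
Proof. exact/injectiveP/(valP P). Qed.

Lemma best_exists P A y : y \in A -> exists b, is_best P A b.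
Proof.
move=> yA; case: (arg_minnP (fun z => nat_of_ord (val P z)) yA) => b bA bmin.
exists b; apply/andP; split=> //; apply/forall_inP => z zA; apply/implyP => zb.
rewrite /prefers ltn_neqAle bmin // andbT.
by apply: contra zb => /eqP /ord_inj /pref_inj ->.
Qed.

Lemma worst_exists P A y : y \in A -> exists w, is_worst P A w.
Proof.
move=> yA; case: (arg_maxnP (fun z => nat_of_ord (val P z)) yA) => w wA wmax.
exists w; apply/andP; split=> //; apply/forall_inP => z zA; apply/implyP => zw.
rewrite /prefers ltn_neqAle [_ <= _]wmax // andbT eq_sym.
by apply: contra zw => /eqP /ord_inj /pref_inj ->.
Qed.

Lemma top_exists P y : exists a, is_top P a.
Proof.
have [a /andP [_ /forall_inP besta]] := best_exists P (in_setT y).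
by exists a; apply/forallP => z; apply: besta.
Qed.

Lemma is_best_prefersN P A b y : is_best P A b -> y \in A -> ~~ prefers P y b.
Proof.
case/andP=> _ /forall_inP bestb yA; case: (eqVneq y b) => [->|yb].
  exact: prefers_irr.
by apply: prefers_asym; move/implyP: (bestb y yA); apply.
Qed.

Lemma is_worst_prefersN P A w y : is_worst P A w -> y \in A -> ~~ prefers P w y.
Proof.
case/andP=> _ /forall_inP worstw yA; case: (eqVneq y w) => [->|yw].
  exact: prefers_irr.
by apply: prefers_asym; move/implyP: (worstw y yA); apply.
Qed.

Lemma is_best_top P A a b : is_top P a -> a \in A -> is_best P A b -> b = a.
Proof.
move=> ta aA bestb; apply/eqP; apply: contraNT (is_best_prefersN bestb aA) => ba.
by move/forallP: ta => /(_ b); rewrite ba.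
Qed.

Lemma is_best_top_mem P A a : is_top P a -> a \in A -> is_best P A a.
Proof.
by move=> /forallP ta aA; apply/andP; split=> //; apply/forall_inP => y _; apply: ta.
Qed.

Lemma is_worst_bottom_mem P A x :
  (forall y, y != x -> prefers P y x) -> x \in A -> is_worst P A x.
Proof.
move=> botx xA; apply/andP; split=> //.
by apply/forall_inP => y _; apply/implyP/botx.
Qed.

Section PrefOfInj.
Variables (g : X -> nat) (g_inj : injective g).

Definition rank_by y := #|[set z | g z < g y]|.

Lemma rank_by_lt y : rank_by y < #|X|.
Proof.
rewrite /rank_by -cardsT; apply: proper_card; rewrite properT.
by apply/eqP => /setP /(_ y); rewrite !inE ltnn.
Qed.

Lemma rank_by_mono y z : g y < g z -> rank_by y < rank_by z.
Proof.
move=> gyz; apply: proper_card; apply/properP; split; last by exists y; rewrite !inE ?ltnn.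
by apply/subsetP => u; rewrite !inE => /ltn_trans; apply.
Qed.

Definition ranking_by : {ffun X -> 'I_#|X|} := [ffun y => Ordinal (rank_by_lt y)].

Lemma prefers_ranking_by y z : (ranking_by y < ranking_by z) = (g y < g z).
Proof.
rewrite !ffunE /=; apply/idP/idP; last exact: rank_by_mono.
case: (ltngtP (g y) (g z)) => // [/rank_by_mono lt_zy lt_yz|/g_inj ->].
  by have := ltn_trans lt_zy lt_yz; rewrite ltnn.
by rewrite ltnn.
Qed.

Lemma ranking_by_inj : injectiveb ranking_by.
Proof.
apply/injectiveP => y z eyz; apply: g_inj; apply/eqP.
have := prefers_ranking_by y z; have := prefers_ranking_by z y.
by rewrite eyz ltnn; case: ltngtP => // ->.
Qed.

Definition pref_of_inj : pref X := exist _ ranking_by ranking_by_inj.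

Lemma prefers_pref_of_inj y z : prefers pref_of_inj y z = (g y < g z).
Proof. exact: prefers_ranking_by. Qed.

End PrefOfInj.

(* The block index (y != a) + (y == x) puts a alone in block 0 and x alone in
   block 2; the enum_rank offset separates the others and makes the key
   injective modulo #|X|. *)
Definition top_bottom_key a x y : nat :=
  ((y != a) + (y == x)) * #|X| + @nat_of_ord #|X| (enum_rank y).

Lemma top_bottom_key_inj a x : injective (top_bottom_key a x).
Proof.
move=> y z /(congr1 (modn^~ #|X|)); rewrite /= !modnMDl !modn_small ?ltn_ord //.
by move/ord_inj/enum_rank_inj.
Qed.

Lemma exists_pref_top_bottom a x : a != x ->
  exists Q, is_top Q a /\ forall y, y != x -> prefers Q y x.
Proof.
move=> ax; exists (pref_of_inj (@top_bottom_key_inj a x)).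
have rk_lt y : @nat_of_ord #|X| (enum_rank y) < #|X| := ltn_ord _.
split=> [|y yx]; rewrite ?prefers_pref_of_inj /top_bottom_key.
  apply/forallP => y; apply/implyP => ya; rewrite prefers_pref_of_inj /top_bottom_key.
  rewrite ya eqxx (negPf ax); have := rk_lt a; case: (y == x) => /=; lia.
rewrite (negPf yx) eqxx [x == a]eq_sym (negPf ax).
by have := rk_lt y; have := rk_lt x; case: (y != a) => /=; lia.
Qed.

End Preferences.

Section OptionSets.
Variables (n : nat) (X : finType) (f : profile n X -> X) (i : 'I_n).
Implicit Types (Pi : pref X) (P : profile n X) (x : X).

Lemma upd_id P : upd P i (P i) = P.
Proof. by apply/ffunP => j; rewrite ffunE; case: eqP => // ->. Qed.

Lemma option_setP Pi x :
  reflect (exists P, f (upd P i Pi) = x) (x \in option_set f i Pi).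
Proof.
by rewrite inE; apply: (iffP existsP) => -[P /eqP fP]; exists P.
Qed.

Lemma mem_option_set Pi P : f (upd P i Pi) \in option_set f i Pi.
Proof. by apply/option_setP; exists P. Qed.

Lemma option_set_tops Pi Pi' :
  tops_only f -> is_top Pi =1 is_top Pi' -> option_set f i Pi = option_set f i Pi'.
Proof.
move=> tops eq_top; apply/setP => x.
apply/option_setP/option_setP => -[P <-]; exists P; apply: tops => j y;
  by rewrite !ffunE; case: (j == i); rewrite // eq_top.
Qed.

End OptionSets.

Section ObviousManipulation.
Variables (n : nat) (X : finType) (f : profile n X -> X) (i : 'I_n).
Implicit Types (Pi : pref X) (x : X).

Lemma NOM_veto_not_top Pi x :
  onto f -> NOM f -> vetoes_via f i x Pi -> ~~ is_top Pi x.
Proof.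
rewrite /vetoes_via => onto_f nom vx; apply/negP => tx.
have [P0 fP0] := onto_f x.
have neqx y : y \in option_set f i Pi -> y != x.
  by move=> yO; apply: contraNneq vx => <-.
have [b bestb] := best_exists Pi (mem_option_set f i Pi P0).
apply: (nom i Pi (P0 i)); split.
  by exists P0; rewrite upd_id fP0 is_top_prefers ?neqx ?mem_option_set.
right; exists b, x; rewrite bestb is_best_top_mem //=.
  by rewrite is_top_prefers // neqx //; case/andP: bestb.
by apply/option_setP; exists P0; rewrite upd_id.
Qed.

Lemma NOM_not_top_veto Pi x :
  tops_only f -> NOM f -> in_V f i x -> ~~ is_top Pi x -> vetoes_via f i x Pi.
Proof.
rewrite /vetoes_via => tops nom [Pi0 vx0] ntx; apply/negP => xO.
have [a ta] := top_exists Pi x.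
have ax : a != x by apply: contraNneq ntx => <-.
have [Q [tQ botQ]] := exists_pref_top_bottom ax.
have OQ : option_set f i Q = option_set f i Pi.
  by apply: option_set_tops => // y; rewrite (is_top_uniq _ tQ) (is_top_uniq _ ta).
rewrite -OQ in xO; case/option_setP: xO => P fP.
have neqx y : y \in option_set f i Pi0 -> y != x.
  by move=> yO; apply: contraNneq vx0 => <-.
have [w' worstw'] := worst_exists Q (mem_option_set f i Pi0 P).
apply: (nom i Q Pi0); split.
  by exists P; rewrite fP botQ ?neqx ?mem_option_set.
left; exists x, w'; rewrite worstw' is_worst_bottom_mem //=.
  by rewrite botQ // neqx //; case/andP: worstw'.
by rewrite -fP mem_option_set.
Qed.

Section StrongVetoes.
Hypothesis strong : forall x, in_V f i x -> in_SV f i x.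

Lemma strong_veto_option_set Pi y :
  in_V f i y -> (y \in option_set f i Pi) = is_top Pi y.
Proof.
move=> /strong [_ /(_ Pi) sv]; apply/idP/idP => h; apply: contraTT h.
  exact: sv.2.
exact: sv.1.
Qed.

Lemma top_mem_option_set Pi a : is_top Pi a -> a \in option_set f i Pi.
Proof.
move=> ta; apply/negPn/negP => aO.
have Va : in_V f i a by exists Pi.
by rewrite (strong_veto_option_set _ Va) ta in aO.
Qed.

Lemma strong_vetoes_no_obvious_manipulation Pi Pi' :
  ~ obvious_manipulation f i Pi Pi'.
Proof.
case=> _ [[w [w' /and3P [worstw worstw' w'w]]] | [b [b' /and3P [bestb _ b'b]]]].
  have wO' : w \notin option_set f i Pi'.
    by apply/negP => /(is_worst_prefersN worstw'); rewrite w'w.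
  have Vw : in_V f i w by exists Pi'.
  have tw : is_top Pi w by rewrite -(strong_veto_option_set _ Vw); case/andP: worstw.
  by move: (is_top_prefersN w' tw); rewrite w'w.
have [a ta] := top_exists Pi b.
have ba := is_best_top ta (top_mem_option_set ta) bestb.
by move: (is_top_prefersN b' ta); rewrite -ba b'b.
Qed.

End StrongVetoes.
End ObviousManipulation.

Theorem theorem1 (n : nat) (X : finType) (hn : (2 <= n)%N) (hm : (2 <= #|X|)%N)
  (f : profile n X -> X) :
  onto f -> tops_only f ->
  (NOM f <-> forall (i : 'I_n) (x : X), in_SV f i x <-> in_V f i x).
Proof.
move=> onto_f tops; split=> [nom i x | strong i].
  split=> [[] // | Vx]; split=> // Pi; split.
    exact: NOM_veto_not_top.
  exact: NOM_not_top_veto.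
by apply: strong_vetoes_no_obvious_manipulation => x /(strong i x).
Qed.
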